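(* Let $(E,(\cdot,\cdot),\mathcal H)$ be an extended affine Lie algebra with root system $R$. For $\alpha\in R^\times$ and $\sigma\in R^0$ with $\alpha+\sigma\in R$, we have $\big([E_{\alpha+\sigma},E_{-\alpha}],[E_{-\alpha-\sigma},E_{\alpha}]\big)\neq\{0\}$.
   Context: All Lie algebras are over $\mathbb C$. An extended affine Lie algebra (EALA) is a triple $(E,(\cdot,\cdot),\mathcal H)$ where $E$ is a Lie algebra, $\mathcal H$ a subalgebra and $(\cdot,\cdot)$ a bilinear form on $E$ such that: (EA1) the form is symmetric, non-degenerate and invariant; (EA2) $\mathcal H$ is finite-dimensional, $E=\bigoplus_{\alpha\in\mathcal H^*}E_\alpha$ with $E_\alpha=\{x:[h,x]=\alpha(h)x\ \forall h\in\mathcal H\}$ and $E_0=\mathcal H$; the root system is $R=\{\alpha:E_\alpha\neq0\}$; $t_\alpha\in\mathcal H$ is given by $\alpha(h)=(h,t_\alpha)$, $(\alpha,\beta):=(t_\alpha,t_\beta)$, $R^\times=\{\alpha\in R:(\alpha,\alpha)\neq0\}$, $R^0=R\setminus R^\times$; (EA3) $\mathrm{ad}\,x$ is locally nilpotent for $x\in E_\alpha$, $\alpha\in R^\times$; (EA4) $R$ is discrete in $\mathcal H^*$; (EA5) $R^\times$ is connected (not a union of two nonempty mutually orthogonal subsets) and every isotropic root is non-isolated. Root systems are assumed reduced. *)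

From HB Require Import structures.
From mathcomp Require Import all_boot all_order all_algebra.
From mathcomp Require Import complex.
From mathcomp Require Import reals.
Set Implicit Arguments. Unset Strict Implicit. Unset Printing Implicit Defensive.
Import Order.TTheory GRing.Theory Num.Theory.
Local Open Scope ring_scope.
Local Open Scope complex_scope.

Section EALA.
Variable R : realType.
Notation C := (R[i]).
Variable E : lmodType C.
Variable br : E -> E -> E.
Variable form : E -> E -> C.
Variable n : nat.                   (* dim H *)
Variable iota : 'rV[C]_n -> E.      (* a linear parametrisation of H *)

Record is_lie : Prop := IsLie {
  br_linl : forall (a : C) x y z, br (a *: x + y) z = a *: br x z + br y z;
  br_linr : forall (a : C) x y z, br z (a *: x + y) = a *: br z x + br z y;
  br_alt : forall x, br x x = 0;
  br_jacobi : forall x y z, br x (br y z) + br y (br z x) + br z (br x y) = 0 }.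

(* H^* is identified with 'rV[C]_n: alpha (iota v) = \sum_i v_i alpha_i *)
Definition pair (v a : 'rV[C]_n) : C := \sum_(i < n) v 0 i * a 0 i.

Definition wsp (a : 'rV[C]_n) (x : E) : Prop :=
  forall v, br (iota v) x = pair v a *: x.

Definition isroot (a : 'rV[C]_n) : Prop := exists2 x, wsp a x & x <> 0.

Definition gram : 'M[C]_n :=
  \matrix_(i, j) form (iota (delta_mx 0 i)) (iota (delta_mx 0 j)).

(* t_alpha = iota (alpha * gram^-1) satisfies alpha(h) = (h, t_alpha);
   hence (alpha, beta) := (t_alpha, t_beta) = alpha gram^-1 beta^T *)
Definition formD (a b : 'rV[C]_n) : C := (a *m invmx gram *m b^T) 0 0.

Definition nonisotropic (a : 'rV[C]_n) : Prop := isroot a /\ formD a a <> 0.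
Definition isotropic (a : 'rV[C]_n) : Prop := isroot a /\ formD a a = 0.

Record is_EALA : Prop := IsEALA {
  ea_lie : is_lie;
  ea_form_linl : forall (a : C) x y z, form (a *: x + y) z = a * form x z + form y z;
  ea_form_sym : forall x y, form x y = form y x;
  ea_form_nondeg : forall x, (forall y, form x y = 0) -> x = 0;
  ea_form_inv : forall x y z, form (br x y) z = form x (br y z);
  (* EA2: H finite-dimensional, iota a linear bijection onto H *)
  ea_iota_lin : forall (a : C) v w, iota (a *: v + w) = a *: iota v + iota w;
  ea_iota_inj : injective iota;
  (* E = (+)_alpha E_alpha (sum of weight spaces spans E; directness is automatic) *)
  ea_decomp : forall x : E, exists (s : seq 'rV[C]_n) (f : 'rV[C]_n -> E),
      (forall a, a \in s -> wsp a (f a)) /\ x = \sum_(a <- s) f a;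
  ea_E0 : forall x, wsp 0 x <-> exists v, x = iota v;
  ea_locnil : forall a x, nonisotropic a -> wsp a x ->
      forall y, exists k, iter k (br x) y = 0;
  ea_discrete : forall a, isroot a -> exists2 eps : C, 0 < eps &
      forall b, isroot b -> (forall i, `|b 0 i - a 0 i| < eps) -> b = a;
  (* EA5: R^x connected *)
  ea_connected : forall A B : 'rV[C]_n -> Prop,
      (forall a, nonisotropic a <-> A a \/ B a) ->
      (exists a, A a) -> (exists b, B b) ->
      ~ (forall a b, A a -> B b -> formD a b = 0);
  ea_nonisolated : forall s, isotropic s ->
      exists a, nonisotropic a /\ isroot (s + a);
  ea_reduced : forall a, nonisotropic a -> ~ isroot (2%:R *: a) }.

Definition brsp (A B : E -> Prop) (u : E) : Prop :=
  exists s : seq (E * E), (forall p, p \in s -> A p.1 /\ B p.2) /\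
    u = \sum_(p <- s) br p.1 p.2.

End EALA.

From Pilot Require Import Defs.
From HB Require Import structures.
From mathcomp Require Import all_boot all_order all_algebra.
From mathcomp Require Import complex.
From mathcomp Require Import reals.
From mathcomp Require Import sesquilinear.
From mathcomp Require Import ring.
From Stdlib Require Import Classical.
Import Order.TTheory GRing.Theory Num.Theory.
Local Open Scope ring_scope.
Local Open Scope complex_scope.
Set Implicit Arguments. Unset Strict Implicit. Unset Printing Implicit Defensive.

(* Pick e in E_a and f in E_(-a) with (e, f) <> 0.  Then [e, f] = (e, f) t_a
   and a([e, f]) = (e, f)(a, a) <> 0, so e, f, [e, f] span an sl2 acting by
   locally nilpotent operators, and the usual string computation makes
   2 b([e, f]) / a([e, f]) a natural number N for every weight b carrying a
   nonzero y with [f, [e, y]] = 0, and a nonpositive integer -M for every b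
   carrying a nonzero x with [e, [f, x]] = 0.  If the two bracket spaces of the
   statement were orthogonal, invariance and nondegeneracy would give
   [e, [f, x]] = 0 on all of E_(a+s); as N + 2 = -M is impossible, no nonzero
   y in E_s has [f, [e, y]] = 0.  Applied to y = [f, x] this shows that ad f
   kills E_(a+s), and then applied to any y in E_s it shows E_s = 0. *)

Lemma iter_last_nonzero (T : eqType) (g : T -> T) (z0 z : T) k :
  z != z0 -> iter k g z = z0 -> exists N, iter N.+1 g z = z0 /\ iter N g z != z0.
Proof.
move=> nz; elim: k => [|k IH] /= Hk; first by rewrite Hk eqxx in nz.
by have [/IH|] := eqVneq (iter k g z) z0; last exists k.
Qed.

Section Pairing.
Variables (R : realType) (n : nat).
Implicit Types v a b : 'rV[R[i]]_n.

Lemma pairE v a : pair v a = (v *m a^T) 0 0.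
Proof. by rewrite mxE; apply: eq_bigr => j _; rewrite mxE. Qed.

Lemma pairDr v a b : pair v (a + b) = pair v a + pair v b.
Proof. by rewrite !pairE linearD mulmxDr mxE. Qed.

Lemma pairNr v a : pair v (- a) = - pair v a.
Proof. by rewrite !pairE linearN mulmxN mxE. Qed.

Lemma pairNl v a : pair (- v) a = - pair v a.
Proof. by rewrite !pairE mulNmx mxE. Qed.

Lemma pairMnr v a k : pair v (a *+ k) = pair v a *+ k.
Proof. by rewrite !pairE !linearMn mulmxnE. Qed.

Lemma pairC v a : pair v a = pair a v.
Proof. by apply: eq_bigr => j _; rewrite mulrC. Qed.

Lemma pair_delta (j : 'I_n) a : pair (delta_mx 0 j) a = a 0 j.
Proof. by rewrite pairE -rowE !mxE. Qed.

End Pairing.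

Section LieAlgebra.
Variables (R : realType) (E : lmodType R[i]) (br : E -> E -> E).
Variables (n : nat) (iota : 'rV[R[i]]_n -> E).
Hypothesis lie : is_lie br.
Local Notation W := (wsp br iota).

HB.instance Definition _ := bilinear_isBilinear.Build R[i] E E E *:%R *:%R br
  (fun z a x y => br_linl lie a x y z, fun z a x y => br_linr lie a x y z).

Lemma br_anti x y : br x y = - br y x.
Proof.
have := br_alt lie (x + y); rewrite (linearDl br) !(linearDr br) /= !(br_alt lie) add0r addr0.
by move/eqP; rewrite addr_eq0 => /eqP.
Qed.

Lemma br_commutator x y z : br x (br y z) - br y (br x z) = br (br x y) z.
Proof.
have := br_jacobi lie x y z; rewrite (br_anti z x) linearNr (br_anti z (br x y)).
by move/eqP; rewrite addr_eq0 opprK => /eqP.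
Qed.

Lemma br_string X Y z (mu c : R[i]) :
  (forall k, br (br X Y) (iter k (br Y) z) = (mu - k%:R * c) *: iter k (br Y) z) ->
  br Y (br X z) = 0 ->
  forall k, br X (iter k.+1 (br Y) z) = (k.+1%:R * (mu - k%:R * c / 2)) *: iter k (br Y) z.
Proof.
move=> Hh Hz; elim=> [|k IH].
  by rewrite /= -[br X _]subr0 -Hz br_commutator (Hh 0%N) !mul0r !subr0 mul1r.
move/eqP: (br_commutator X Y (iter k.+1 (br Y) z)); rewrite subr_eq => /eqP /= ->.
by rewrite IH linearZr_LR (Hh k.+1) -scalerDl; congr (_ *: _); field.
Qed.

Lemma string_weight_nat X Y z (mu c : R[i]) :
  (forall k, br (br X Y) (iter k (br Y) z) = (mu - k%:R * c) *: iter k (br Y) z) ->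
  br Y (br X z) = 0 -> z != 0 -> (exists k, iter k (br Y) z = 0) ->
  exists N : nat, mu *+ 2 = c *+ N.
Proof.
move=> Hh Hz nz [k Hk]; have [N [HN1 HN]] := iter_last_nonzero nz Hk.
exists N; move: (br_string Hh Hz N); rewrite HN1 linear0r => /esym/eqP.
rewrite scaler_eq0 (negPf HN) orbF mulf_eq0 pnatr_eq0 /= subr_eq0 => /eqP ->.
by rewrite -mulr_natr -mulr_natl; field.
Qed.

Lemma wsp_br a b x y : W a x -> W b y -> W (a + b) (br x y).
Proof.
move=> Hx Hy v; move/eqP: (br_commutator (iota v) x y).
rewrite Hx Hy linearZl_LR linearZr_LR subr_eq => /eqP ->.
by rewrite pairDr scalerDl addrC.
Qed.

Lemma wsp_iter a b y z k : W a y -> W b z -> W (b + a *+ k) (iter k (br y) z).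
Proof.
move=> Hy Hz; elim: k => [|k IH]; first by rewrite addr0.
by rewrite mulrS addrCA; apply: wsp_br.
Qed.

Lemma wsp_string_weight X Y z h a b :
  br X Y = iota h -> W a Y -> W b z -> z != 0 ->
  br Y (br X z) = 0 -> (exists k, iter k (br Y) z = 0) ->
  exists N : nat, pair h b *+ 2 = - pair h a *+ N.
Proof.
move=> Hh HY Hz nz Hz0 Hnil.
apply: (string_weight_nat (X := X) (Y := Y) (z := z)) => // k.
by rewrite Hh (wsp_iter k HY Hz) pairDr pairMnr mulrN opprK mulr_natl.
Qed.

End LieAlgebra.

Section ExtendedAffine.
Variables (R : realType) (E : lmodType R[i]) (br : E -> E -> E) (form : E -> E -> R[i]).
Variables (n : nat) (iota : 'rV[R[i]]_n -> E).
Hypothesis HE : is_EALA br form iota.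
Local Notation W := (wsp br iota).
Local Notation lie := (ea_lie HE).

Lemma form_linr z : GRing.linear_for *%R (form z).
Proof. by move=> c x y; rewrite !(ea_form_sym HE z) (ea_form_linl HE). Qed.

HB.instance Definition _ := bilinear_isBilinear.Build R[i] E E E *:%R *:%R br
  (fun z a x y => br_linl lie a x y z, fun z a x y => br_linr lie a x y z).
HB.instance Definition _ := bilinear_isBilinear.Build R[i] E E R[i] *%R *%R form
  (fun z a x y => ea_form_linl HE a x y z, form_linr).
HB.instance Definition _ := GRing.isLinear.Build R[i] _ E *:%R iota (ea_iota_lin HE).

Lemma iota_coord v : iota v = \sum_j v 0 j *: iota (delta_mx 0 j).
Proof. by rewrite {1}(row_sum_delta v) linear_sum; apply: eq_bigr => j _; rewrite linearZ. Qed.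

Lemma form_iota u v : form (iota u) (iota v) = (u *m gram form iota *m v^T) 0 0.
Proof.
rewrite -mulmxA mxE (iota_coord u) linear_sumlz; apply: eq_bigr => i _.
rewrite linearZl_LR mxE (iota_coord v) linear_sumr; congr (_ * _); apply: eq_bigr => j _.
by rewrite linearZr_LR !mxE mulrC.
Qed.

Lemma wsp_form_neq0_opp a b x y : W a x -> W b y -> form x y != 0 -> a + b = 0.
Proof.
move=> Hx Hy nxy; apply/rowP => j; rewrite !mxE.
have := ea_form_inv HE x (iota (delta_mx 0 j)) y.
rewrite (br_anti lie) Hx Hy linearNl linearZl_LR linearZr_LR /= => /eqP.
rewrite eq_sym -addr_eq0 -mulrDl mulf_eq0 (negPf nxy) orbF -pairDr pair_delta mxE.
by rewrite addrC => /eqP.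
Qed.

Lemma wsp_form_nondeg b x : W b x -> (forall y, W (- b) y -> form x y = 0) -> x = 0.
Proof.
move=> Hx Hb; apply: (ea_form_nondeg HE) => y.
have [s [g [Hg ->]]] := ea_decomp HE y.
rewrite linear_sumr big_seq big1 // => c /Hg Hc.
have [Ec | nc] := eqVneq c (- b); first by apply: Hb; rewrite -Ec.
apply/eqP; apply: contraNT nc => /(wsp_form_neq0_opp Hx Hc)/eqP.
by rewrite addrC addr_eq0.
Qed.

Lemma wsp_form_partner b x : W b x -> x != 0 -> exists2 y, W (- b) y & form x y != 0.
Proof.
move=> Hx nx; apply: NNPP => Hno; move/eqP: nx; apply.
apply: (wsp_form_nondeg Hx) => y Hy; apply: NNPP => Hxy.
by apply: Hno; exists y => //; apply/eqP.
Qed.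

Lemma gram_unit : gram form iota \in unitmx.
Proof.
have gram_inj (u : 'rV_n) : u *m gram form iota = 0 -> u = 0.
  move=> Hu; apply: (ea_iota_inj HE); rewrite linear0.
  apply: (@wsp_form_nondeg 0); first by apply/(ea_E0 HE); exists u.
  by move=> y; rewrite oppr0 => /(ea_E0 HE) [v ->]; rewrite form_iota Hu mul0mx mxE.
rewrite -row_free_unit -kermx_eq0; apply/eqP/row_matrixP => i; rewrite row0.
by apply: gram_inj; apply/sub_kermxP; exact: row_sub.
Qed.

(* [w] plays the role of K t_a: (iota v, iota w) = K a(v) forces w^T = K gram^-1 a^T. *)
Lemma pair_formD w a (K : R[i]) :
  (forall v, form (iota v) (iota w) = pair v a * K) -> pair w a = K * Defs.formD form iota a a.
Proof.
move=> Hw.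
have gram_w : gram form iota *m w^T = K *: a^T.
  apply/colP => i; have := Hw (delta_mx 0 i).
  by rewrite form_iota pair_delta -rowE -row_mul !mxE mulrC.
rewrite pairC pairE.
have -> : w^T = invmx (gram form iota) *m (K *: a^T) by rewrite -gram_w mulKmx ?gram_unit.
by rewrite -!scalemxAr mxE mulmxA.
Qed.

Lemma formDNN a : Defs.formD form iota (- a) (- a) = Defs.formD form iota a a.
Proof. by rewrite /Defs.formD linearN /= mulmxN !mulNmx opprK. Qed.

Lemma brsp_br (A B : E -> Prop) x y : A x -> B y -> brsp br A B (br x y).
Proof.
by exists [:: (x, y)]; split; [move=> p; rewrite inE => /eqP -> | rewrite big_seq1].
Qed.

Section Sl2Triple.
Variables (a : 'rV[R[i]]_n) (e f : E) (w : 'rV[R[i]]_n).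
Hypotheses (Ha : nonisotropic br form iota a) (He : W a e) (Hf : W (- a) f).
Hypotheses (Hw : br e f = iota w) (Hef : form e f != 0).

Lemma coroot_pair_neq0 : pair w a != 0.
Proof.
have aa_neq0 : Defs.formD form iota a a != 0 by apply/eqP; case: Ha.
rewrite (@pair_formD w a (form e f)) ?mulf_neq0 // => v.
by rewrite -Hw -(ea_form_inv HE) He linearZl_LR.
Qed.

Lemma nonisotropicN : nonisotropic br form iota (- a).
Proof.
split; last by rewrite formDNN; case: Ha.
by exists f => // f0; move: Hef; rewrite f0 linear0r eqxx.
Qed.

Lemma weight_nat_below b y : W b y -> y != 0 -> br f (br e y) = 0 ->
  exists N : nat, pair w b *+ 2 = pair w a *+ N.
Proof.
move=> Hy ny Hy0; have := ea_locnil HE nonisotropicN Hf y.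
by case/(wsp_string_weight lie Hw Hf Hy ny Hy0) => N; rewrite pairNr opprK; exists N.
Qed.

Lemma weight_nat_above b x : W b x -> x != 0 -> br e (br f x) = 0 ->
  exists N : nat, pair w b *+ 2 = - pair w a *+ N.
Proof.
move=> Hx nx Hx0; have Hfe : br f e = iota (- w) by rewrite (br_anti lie) Hw linearN.
have := ea_locnil HE Ha He x.
case/(wsp_string_weight lie Hfe He Hx nx Hx0) => N.
by rewrite !pairNl opprK => HN; exists N; rewrite mulNrn -HN mulNrn opprK.
Qed.

Lemma weights_incompatible b y x :
  W b y -> y != 0 -> br f (br e y) = 0 ->
  W (a + b) x -> x != 0 -> br e (br f x) = 0 -> False.
Proof.
move=> Hy ny Hy0 Hx nx Hx0.
have [N HN] := weight_nat_below Hy ny Hy0.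
have [M HM] := weight_nat_above Hx nx Hx0.
move: HM; rewrite pairDr mulrnDl HN -mulrnDr mulNrn => /eqP.
rewrite -addr_eq0 -mulrnDr mulrn_eq0 (negPf coroot_pair_neq0) orbF.
by rewrite add2n !addSn.
Qed.

Lemma ad_ef_vanish b :
  (forall u v, brsp br (W (a + b)) (W (- a)) u -> brsp br (W (- a - b)) (W a) v ->
     form u v = 0) ->
  forall x, W (a + b) x -> br e (br f x) = 0.
Proof.
move=> orth x Hx; apply: (@wsp_form_nondeg (a + b)).
  by have := wsp_br lie He (wsp_br lie Hf Hx); rewrite addKr.
move=> y; rewrite opprD => Hy.
have := orth _ _ (brsp_br Hx Hf) (brsp_br Hy He).
rewrite (ea_form_sym HE) (ea_form_inv HE) (br_anti lie x) !linearNr => /eqP.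
by rewrite oppr_eq0 (ea_form_sym HE) => /eqP.
Qed.

Lemma brsp_form_neq0 s : isroot br iota s -> isroot br iota (a + s) ->
  exists u v, brsp br (W (a + s)) (W (- a)) u /\ brsp br (W (- a - s)) (W a) v /\
    form u v <> 0.
Proof.
move=> [z Hz nz] [x0 Hx0 /eqP nx0]; apply: NNPP => Hno.
have ef_x0 : forall x, W (a + s) x -> br e (br f x) = 0.
  by apply: ad_ef_vanish => u v Hu Hv; apply: NNPP => Huv; apply: Hno; exists u, v.
have lowest0 y : W s y -> br f (br e y) = 0 -> y = 0.
  move=> Hy Hy0; apply: NNPP => /eqP ny.
  exact: weights_incompatible Hy ny Hy0 Hx0 nx0 (ef_x0 _ Hx0).
have f_x0 x : W (a + s) x -> br f x = 0.
  move=> Hx; apply: lowest0; last by rewrite ef_x0 // linear0r.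
  by have := wsp_br lie Hf Hx; rewrite addKr.
have Hez : W (a + s) (br e z) := wsp_br lie He Hz.
by apply: nz; apply: lowest0 Hz (f_x0 _ Hez).
Qed.

End Sl2Triple.

End ExtendedAffine.

Unset Implicit Arguments.

Theorem lemma2p8 (R : realType) (E : lmodType R[i]) (br : E -> E -> E)
  (form : E -> E -> R[i]) (n : nat) (iota : 'rV[R[i]]_n -> E)
  (HE : is_EALA br form iota) (a s : 'rV[R[i]]_n) :
  nonisotropic br form iota a -> isotropic br form iota s ->
  isroot br iota (a + s) ->
  exists u v,
    brsp br (wsp br iota (a + s)) (wsp br iota (- a)) u /\
    brsp br (wsp br iota (- a - s)) (wsp br iota a) v /\
    form u v <> 0.
Proof.
move=> Ha [Hs _] Has; have [[e He /eqP ne] _] := Ha.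
have [f Hf Hef] := wsp_form_partner HE He ne.
have [w Hw] : exists w, br e f = iota w.
  by have := wsp_br (ea_lie HE) He Hf; rewrite addrN => /(ea_E0 HE).
by apply: (brsp_form_neq0 HE Ha He Hf Hw Hef Hs Has).
Qed.
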